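(* For every fixed integer $k\ge1$, as formal power series in $y$, \[ \sum_{n\ge0}q_{n,k}y^n=\frac{(2-y)y^{2k}}{(1-y-y^2)^{k+1}}+y\,\delta_{k1}, \] where $\delta$ is the Kronecker delta.
   Context: For $n\ge1$ let $\Xi_n$ be the poset on $\{x_1,\dots,x_n\}$ whose cover relations are exactly: $x_2\prec x_1$, $x_3\prec x_2$, and for $3\le i\le n-1$, $x_i\prec x_{i+1}$ if $i$ is odd and $x_{i+1}\prec x_i$ if $i$ is even (so $x_1>x_2>x_3<x_4>x_5<\cdots$). A filter of a poset is an up-closed subset. The matchable Lucas cube $\Omega_n$ is the graph whose vertices are the filters of $\Xi_n$, two filters adjacent iff one is obtained from the other by deleting a single element; $\Omega_0$ is the one-vertex graph. $q_{n,k}$ denotes the number of induced subgraphs of $\Omega_n$ isomorphic to the $k$-dimensional hypercube ($0$ if there are none). *)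

From mathcomp Require Import all_boot all_order all_algebra.
Set Implicit Arguments. Unset Strict Implicit. Unset Printing Implicit Defensive.
Import GRing.Theory.

(* Element x_{j+1} of Xi_n is represented by j : 'I_n (0-based indices).
   Xi_cover n a b  <=>  a is covered by b (a < b is a cover relation). *)
Definition Xi_cover (n : nat) : rel 'I_n := fun a b =>
  [|| (val a == 1) && (val b == 0),               (* x_2 < x_1 *)
      (val a == 2) && (val b == 1),               (* x_3 < x_2 *)
      [&& 2 <= val a, val b == (val a).+1 & ~~ odd (val a)]
        (* x_i < x_{i+1}, i = a+1 >= 3 odd *)
    | [&& 2 <= val b, val a == (val b).+1 & odd (val b)] ].
        (* x_{i+1} < x_i, i = b+1 >= 4 even *)

Definition Xi_le (n : nat) : rel 'I_n := connect (@Xi_cover n).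

Definition is_filter (n : nat) (F : {set 'I_n}) : bool :=
  [forall x, forall y, (x \in F) && Xi_le x y ==> (y \in F)].

Definition Omega_adj (n : nat) (A B : {set 'I_n}) : bool :=
  ((B \subset A) && (#|A :\: B| == 1)) || ((A \subset B) && (#|B :\: A| == 1)).

Definition cube_adj (k : nat) (u v : {ffun 'I_k -> bool}) : bool :=
  #|[set i | u i != v i]| == 1.

Definition induces_cube (n k : nat) (S : {set {set 'I_n}}) : bool :=
  [forall A in S, is_filter A] &&
  [exists f : {ffun {ffun 'I_k -> bool} -> {set 'I_n}},
     [&& injectiveb f, [set f u | u in {ffun 'I_k -> bool}] == S &
         [forall u, forall v, Omega_adj (f u) (f v) == cube_adj u v]]].

Definition q (n k : nat) : nat :=
  #|[set S : {set {set 'I_n}} | induces_cube k S]|.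

Definition qgen (k N : nat) : {poly int} :=
  \sum_(n < N.+1) (q n k)%:R *: 'X^n.

Definition Dpoly : {poly int} := 1 - 'X - 'X^2.

From mathcomp Require Import all_boot all_order all_algebra.
From mathcomp Require Import ring zify.
Import GRing.Theory.
Set Implicit Arguments. Unset Strict Implicit. Unset Printing Implicit Defensive.

(* Omega_n is the subgraph of the n-cube induced on the filters of Xi_n, and an
   induced Q_k in a hypercube is a subcube {B ∪ Y | Y ⊆ X} with B, X disjoint
   and |X| = k.  Such a subcube consists of filters iff every cover a ≺ b with
   a ∈ B ∪ X has b ∈ B.  Writing 1 on B, 2 on X and 0 elsewhere turns these
   subcubes into words over {0,1,2} with k letters 2, subject to a condition on
   consecutive letters only; a transfer-matrix count then gives
   q_{n+4,k} = q_{n+3,k} + q_{n+2,k} + q_{n+2,k-1} together with the values for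
   n <= 3.  Thus (1-y-y^2) Q_k(y) = y^2 Q_{k-1}(y) up to polynomial boundary
   terms for k <= 2, and the closed form follows by induction on k. *)

(** * Induced hypercubes of Omega_n are subcubes *)

Section Toggle.
Variable T : finType.
Implicit Types (A : {set T}) (x y : T).

Definition toggle A x : {set T} := [set y | (y \in A) (+) (y == x)].

Lemma in_toggle A x y : (y \in toggle A x) = (y \in A) (+) (y == x).
Proof. by rewrite inE. Qed.

Lemma toggleK x : involutive (toggle^~ x).
Proof. by move=> A; apply/setP => y; rewrite !in_toggle -addbA addbb addbF. Qed.

Lemma toggle_square A a b c d :
  toggle (toggle A a) c = toggle (toggle A b) d -> a != b -> a != c -> c = b.
Proof.
move=> /setP eqA neq_ab neq_ac.
have eq_xor y : (y == a) (+) (y == c) = (y == b) (+) (y == d).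
  by move: (eqA y); rewrite !in_toggle -!addbA => /addbI.
apply/eqP; apply: contraT => neq_cb.
have eq_bd : b = d.
  move: (eq_xor b); rewrite eqxx eq_sym (negbTE neq_ab) eq_sym (negbTE neq_cb).
  by case: eqP.
by move: (eq_xor a); rewrite -eq_bd eqxx (negbTE neq_ab) (negbTE neq_ac) addbb.
Qed.

End Toggle.

Lemma Omega_adjE n (A B : {set 'I_n}) :
  Omega_adj A B = (#|(A :\: B) :|: (B :\: A)| == 1).
Proof.
rewrite /Omega_adj cardsU.
have -> : (A :\: B) :&: (B :\: A) = set0.
  by apply/setP => x; rewrite !inE; case: (x \in A); case: (x \in B).
rewrite cards0 subn0 -!setD_eq0 -!cards_eq0.
by case: #|A :\: B| => [|[|a]]; case: #|B :\: A| => [|[|b]].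
Qed.

Lemma Omega_adj_toggle n (A B : {set 'I_n}) :
  Omega_adj A B -> exists x, B = toggle A x.
Proof.
rewrite Omega_adjE => /cards1P [x /setP eqx]; exists x; apply/setP => y.
move: (eqx y); rewrite !inE.
by case: (y \in A); case: (y \in B); case: (y == x).
Qed.

Section Flip.
Variable k : nat.
Implicit Types (u v : {ffun 'I_k -> bool}) (i j : 'I_k).

Definition flip u i : {ffun 'I_k -> bool} := [ffun j => u j (+) (j == i)].

Lemma flipE u i j : flip u i j = u j (+) (j == i).
Proof. by rewrite ffunE. Qed.

Lemma flipK i : involutive (flip^~ i).
Proof. by move=> u; apply/ffunP => j; rewrite !flipE -addbA addbb addbF. Qed.

Lemma flipC u i j : flip (flip u i) j = flip (flip u j) i.
Proof. by apply/ffunP => l; rewrite !flipE -!addbA [(_ == j) (+) _]addbC. Qed.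

Lemma cube_adj_flip u i : cube_adj u (flip u i).
Proof.
apply/cards1P; exists i; apply/setP => j; rewrite !inE flipE.
by case: (u j); case: (j == i).
Qed.

Lemma flip_ind (P : {ffun 'I_k -> bool} -> Prop) :
  P [ffun => false] -> (forall u i, ~~ u i -> P u -> P (flip u i)) -> forall u, P u.
Proof.
move=> P0 Pflip u; move: {2}#|[set j | u j]| (erefl #|[set j | u j]|) => m.
elim: m u => [|m IHm] u.
  move/eqP; rewrite cards_eq0 => /eqP /setP u0.
  suff -> : u = [ffun => false] by [].
  by apply/ffunP => j; move: (u0 j); rewrite !inE ffunE.
move=> card_u; have /set0Pn [j] : [set j | u j] != set0.
  by rewrite -card_gt0 card_u.
rewrite inE => uj; rewrite -(flipK j u); apply: Pflip; first by rewrite flipE uj eqxx.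
apply: IHm; move: card_u; rewrite (cardsD1 j) inE uj => -[<-].
apply: eq_card => l; rewrite !inE flipE.
by case: (eqVneq l j) => [->|]; rewrite ?uj ?addbT ?addbF // andbT.
Qed.

End Flip.

Section Subcube.
Variable T : finType.
Implicit Types B X A : {set T}.

Definition subcube B X : {set {set T}} := [set B :|: Y | Y in powerset X].

Lemma subcubeP B X A :
  reflect (exists2 Y : {set T}, Y \subset X & A = B :|: Y) (A \in subcube B X).
Proof.
apply: (iffP imsetP) => [[Y] | [Y subYX ->]].
  by rewrite powersetE => subYX ->; exists Y.
by exists Y; rewrite ?powersetE.
Qed.

Lemma subcube_inj B X B' X' :
  [disjoint B & X] -> [disjoint B' & X'] -> subcube B X = subcube B' X' ->
  B = B' /\ X = X'.
Proof.
have base_sub (C Z C' Z' : {set T}) : subcube C Z = subcube C' Z' -> C \subset C'.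
  move=> eqS; have /subcubeP [Y _ ->] : C' \in subcube C Z.
    by rewrite eqS; apply/subcubeP; exists set0; rewrite ?sub0set ?setU0.
  exact: subsetUl.
have dir_sub (C Z Z' : {set T}) :
    [disjoint C & Z] -> subcube C Z = subcube C Z' -> Z \subset Z'.
  move=> disCZ eqS; have /subcubeP [Y subYZ' eqU] : C :|: Z \in subcube C Z'.
    by rewrite -eqS; apply/subcubeP; exists Z.
  apply/subsetP => y yZ; have : y \in C :|: Y by rewrite -eqU inE yZ orbT.
  rewrite inE => /orP [yC | /(subsetP subYZ') //].
  by rewrite (disjointFr disCZ yC) in yZ.
move=> disBX disBX' eqS.
have eqB : B = B'.
  by apply/eqP; rewrite eqEsubset (base_sub _ _ _ _ eqS) (base_sub _ _ _ _ (esym eqS)).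
rewrite -{B'}eqB in disBX' eqS *; split=> //.
apply/eqP; rewrite eqEsubset (dir_sub _ _ _ disBX eqS).
exact: dir_sub disBX' (esym eqS).
Qed.

End Subcube.

Section CubeEmbedding.
Variables n k : nat.
Variable f : {ffun {ffun 'I_k -> bool} -> {set 'I_n}}.
Hypothesis f_inj : injective f.
Hypothesis f_adj : forall u v, Omega_adj (f u) (f v) = cube_adj u v.

Local Notation u0 := ([ffun => false] : {ffun 'I_k -> bool}).

Lemma embedding_flip u i : exists x, f (flip u i) = toggle (f u) x.
Proof. by apply: Omega_adj_toggle; rewrite f_adj cube_adj_flip. Qed.

(* Opposite edges of a square of Q_k toggle the same element. *)
Lemma embedding_square u i j a b c : i != j ->
    f (flip u i) = toggle (f u) a -> f (flip u j) = toggle (f u) b ->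
    f (flip (flip u i) j) = toggle (f (flip u i)) c -> c = b.
Proof.
move=> neq_ij fi fj fij; have [d fji] := embedding_flip (flip u j) i.
apply: (@toggle_square _ (f u) a b c d).
- by rewrite -fi -fj -fij -fji flipC.
- apply: contra_neq neq_ij => eq_ab.
  have /ffunP/(_ i) : flip u i = flip u j by apply: f_inj; rewrite fi fj eq_ab.
  by rewrite !flipE eqxx; case: (u i); case: eqP.
- apply: contra_neq neq_ij => eq_ac.
  have /ffunP/(_ i) : flip (flip u i) j = u.
    by apply: f_inj; rewrite fij fi eq_ac toggleK.
  by rewrite !flipE eqxx; case: (u i); case: eqP.
Qed.

Lemma embedding_directions :
  exists phi : 'I_k -> 'I_n, forall u i, f (flip u i) = toggle (f u) (phi i).
Proof.
have [phi fphi] := fin_all_exists (embedding_flip u0).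
exists phi; apply: flip_ind => // u j _ fu i.
have fuj := fu j; have [->|neq_ij] := eqVneq i j.
  by rewrite flipK fuj toggleK.
have [c fc] := embedding_flip (flip u j) i.
by rewrite fc (embedding_square _ fuj (fu i) fc) // eq_sym.
Qed.

Variable phi : 'I_k -> 'I_n.
Hypothesis f_flip : forall u i, f (flip u i) = toggle (f u) (phi i).

Lemma direction_inj : injective phi.
Proof.
move=> i j eq_ij; apply/eqP; apply: contraT => neq_ij.
have : f (flip (flip u0 i) j) = f u0 by rewrite !f_flip eq_ij toggleK.
by move/f_inj/ffunP/(_ j); rewrite !flipE ffunE eqxx eq_sym (negbTE neq_ij).
Qed.

Lemma mem_embedding u y :
  (y \in f u) = (y \in f u0) (+) (y \in phi @: [set j | u j]).
Proof.
elim/flip_ind: u y => [|u j uj IHu] y.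
  have -> : [set j | u0 j] = set0 by apply/setP => j; rewrite !inE ffunE.
  by rewrite imset0 inE addbF.
rewrite f_flip in_toggle IHu -addbA; congr addb.
have -> : [set l | flip u j l] = j |: [set l | u l].
  apply/setP => l; rewrite !inE flipE.
  by case: (eqVneq l j) => [->|]; rewrite ?(negbTE uj) ?addbF.
rewrite imsetU1 in_setU1; case: (eqVneq y (phi j)) => [->|] /=; last by rewrite addbF.
by rewrite (mem_imset _ _ direction_inj) inE (negbTE uj).
Qed.

Lemma embedding_image :
  [set f u | u in {ffun 'I_k -> bool}] =
  subcube (f u0 :\: phi @: [set: 'I_k]) (phi @: [set: 'I_k]).
Proof.
set X := phi @: _.
have out_img y (S : {set 'I_k}) : y \notin X -> y \in phi @: S = false.
  by move=> yX; apply: contraNF yX; apply: (subsetP (imsetS phi (subsetT S))).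
apply/setP => A; apply/imsetP/subcubeP => [[u _ ->] | [Y subYX ->]].
  exists (f u :&: X); rewrite ?subsetIr //; apply/setP => y; rewrite !inE.
  case yX: (y \in X); rewrite /= ?andbT ?andbF ?orbF //.
  by rewrite mem_embedding out_img ?yX ?addbF.
exists [ffun j => (phi j \in Y) (+) (phi j \in f u0)] => //; apply/setP => y.
rewrite mem_embedding !inE; case yX: (y \in X) => /=.
  case/imsetP: yX => j _ ->; rewrite (mem_imset _ _ direction_inj) inE ffunE.
  by rewrite addbC -addbA addbb addbF.
rewrite out_img ?yX // addbF orbC; apply: orb_idl => yY.
by move: yX; rewrite (subsetP subYX y yY).
Qed.

End CubeEmbedding.

(* Positions are 0-based: [cover_up a] means x_{a+1} ≺ x_{a+2}, and otherwise
   x_{a+2} ≺ x_{a+1}. *)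
Definition cover_up (a : nat) : bool := (2 <= a) && ~~ odd a.

Lemma Xi_coverE n (i j : 'I_n) : Xi_cover i j =
  ((val j == (val i).+1) && cover_up i) || ((val i == (val j).+1) && ~~ cover_up j).
Proof.
rewrite /Xi_cover /cover_up; case: i j => [a _] [b _] /=.
apply/idP/idP.
- case/or4P.
  + by case/andP => /eqP -> /eqP ->.
  + by case/andP => /eqP -> /eqP ->.
  + by case/and3P => -> -> ->.
  + by case/and3P => -> -> ->; rewrite orbT.
- case/orP => /andP [/eqP -> h].
  + by case/andP: h => -> ->; rewrite eqxx !orbT.
  + case: b h => [|[|b]] //= h.
    by rewrite negbK in h; rewrite h eqxx !orbT.
Qed.

Lemma Xi_cover_irr n (i : 'I_n) : Xi_cover i i = false.
Proof. by rewrite Xi_coverE ltn_eqF. Qed.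

Lemma is_filter_cover n (F : {set 'I_n}) :
  is_filter F = [forall i, forall j, Xi_cover i j ==> (i \in F) ==> (j \in F)].
Proof.
apply/forallP/forallP => F_up i; apply/forallP => j.
- apply/implyP => cov_ij; apply/implyP => iF.
  by move/forallP/(_ j)/implyP: (F_up i); apply; rewrite iF; apply: connect1.
- apply/implyP => /andP [iF /connectP [p p_path ->]] {j}.
  elim: p i iF p_path => [|x p IHp] i iF //= /andP [cov_ix p_path].
  apply: IHp p_path.
  by move/forallP/(_ x)/implyP/(_ cov_ix)/implyP: (F_up i); apply.
Qed.

Section FilterSubcubes.
Variable n : nat.
Implicit Types B X : {set 'I_n}.

Definition cube_closed B X : bool :=
  [forall i, forall j, Xi_cover i j ==> (i \in B :|: X) ==> (j \in B)].

Lemma subcube_filtersE B X :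
  [forall A in subcube B X, is_filter A] = cube_closed B X.
Proof.
apply/forallP/forallP => [filt i | clBX A].
- apply/forallP => j; apply/implyP => cov_ij.
  have filtA A : A \in subcube B X -> i \in A -> j \in A.
    move=> /(implyP (filt A)); rewrite is_filter_cover.
    by move=> /forallP/(_ i)/forallP/(_ j); rewrite cov_ij /= => /implyP.
  rewrite inE; apply/implyP => /orP [iB | iX].
  + by apply: filtA iB; apply/subcubeP; exists set0; rewrite ?sub0set ?setU0.
  + have : j \in B :|: [set i].
      apply: filtA; last by rewrite !inE eqxx orbT.
      by apply/subcubeP; exists [set i]; rewrite ?sub1set.
    rewrite !inE => /orP [// | /eqP eq_ji].
    by move: cov_ij; rewrite eq_ji Xi_cover_irr.
- apply/implyP => /subcubeP [Y subYX ->]; rewrite is_filter_cover.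
  apply/forallP => i; apply/forallP => j; apply/implyP => cov_ij; apply/implyP => iBY.
  have iBX : i \in B :|: X by move: iBY; apply/subsetP/setUS.
  by move/forallP/(_ j): (clBX i); rewrite cov_ij iBX /= inE => ->.
Qed.

End FilterSubcubes.

Section SubcubeMap.
Variables (n : nat) (B X : {set 'I_n}).
Hypothesis disBX : [disjoint B & X].

Definition subcube_map : {ffun {ffun 'I_#|X| -> bool} -> {set 'I_n}} :=
  [ffun u : {ffun 'I_#|X| -> bool} => B :|: [set enum_val j | j in [set j | u j]]].

Lemma enum_val_onto y : y \in X -> exists j : 'I_#|X|, y = enum_val j.
Proof. by move=> yX; exists (enum_rank_in yX y); rewrite enum_rankK_in. Qed.

Lemma mem_subcube_map u j : (enum_val j \in subcube_map u) = u j.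
Proof.
rewrite ffunE in_setU (disjointFl disBX (enum_valP j)).
by rewrite (mem_imset _ _ (@enum_val_inj _ _)) inE.
Qed.

Lemma mem_subcube_map_out u y : y \notin X -> (y \in subcube_map u) = (y \in B).
Proof.
move=> yX; rewrite ffunE in_setU; apply/orb_idr => /imsetP [j _ eq_y].
by rewrite eq_y enum_valP in yX.
Qed.

Lemma subcube_map_inj : injective subcube_map.
Proof. by move=> u v eq_uv; apply/ffunP => j; rewrite -!mem_subcube_map eq_uv. Qed.

Lemma subcube_map_image :
  [set subcube_map u | u in {ffun 'I_#|X| -> bool}] = subcube B X.
Proof.
apply/setP => A; apply/imsetP/subcubeP => [[u _ ->] | [Y subYX ->]].
  exists [set enum_val j | j in [set j | u j]]; last by rewrite ffunE.
  by apply/subsetP => _ /imsetP [j _ ->]; apply: enum_valP.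
exists [ffun j => enum_val j \in Y] => //; apply/setP => y.
case yX: (y \in X).
  have [j ->] := enum_val_onto yX.
  by rewrite mem_subcube_map ffunE inE (disjointFl disBX (enum_valP j)).
rewrite mem_subcube_map_out ?yX // inE; apply: orb_idr => yY.
by move: yX; rewrite (subsetP subYX y yY).
Qed.

Lemma subcube_map_adj u v :
  Omega_adj (subcube_map u) (subcube_map v) = cube_adj u v.
Proof.
rewrite Omega_adjE /cube_adj -(card_imset _ (@enum_val_inj _ _)).
suff -> : (subcube_map u :\: subcube_map v) :|: (subcube_map v :\: subcube_map u) =
  [set enum_val j | j in [set j | u j != v j]] by [].
apply/setP => y; case yX: (y \in X).
  have [j ->] := enum_val_onto yX.
  rewrite (mem_imset _ _ (@enum_val_inj _ _)) !inE !mem_subcube_map.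
  by case: (u j); case: (v j).
rewrite !inE !mem_subcube_map_out ?yX // andNb orbF; apply/esym/negbTE/imsetP.
by case=> j _ eq_y; rewrite eq_y enum_valP in yX.
Qed.

End SubcubeMap.

Section CubesAreSubcubes.
Variable n : nat.
Implicit Types B X : {set 'I_n}.

Lemma induces_cube_subcube B X :
  [disjoint B & X] -> cube_closed B X -> induces_cube #|X| (subcube B X).
Proof.
move=> disBX clBX; rewrite /induces_cube subcube_filtersE clBX /=.
apply/existsP; exists (subcube_map B X); apply/and3P; split.
- exact/injectiveP/subcube_map_inj.
- by rewrite subcube_map_image.
- by apply/forallP => u; apply/forallP => v; rewrite subcube_map_adj.
Qed.

Lemma induces_cube_is_subcube k S : induces_cube k S ->
  exists B X, [/\ [disjoint B & X], cube_closed B X, #|X| = k & S = subcube B X].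
Proof.
case/andP => S_filt /existsP [f /and3P [/injectiveP f_inj /eqP f_img /forallP f_adj]].
have f_adj' u v : Omega_adj (f u) (f v) = cube_adj u v.
  by move/forallP/(_ v)/eqP: (f_adj u).
have [phi f_flip] := embedding_directions f_inj f_adj'.
have eqS := embedding_image f_inj f_flip; rewrite f_img in eqS.
exists (f [ffun => false] :\: phi @: [set: 'I_k]), (phi @: [set: 'I_k]); split=> //.
- by rewrite disjoints_subset setDE subsetIr.
- by rewrite -subcube_filtersE -eqS.
- by rewrite card_imset ?cardsT ?card_ord //; apply: direction_inj f_flip.
Qed.

End CubesAreSubcubes.

(** * Counting the admissible words *)

(* A word w of length n encodes the subcube with B = {i | w_i = 1} and
   X = {i | w_i = 2}; [link_ok a x y] checks the cover between positions a
   and a+1 carrying the letters x and y. *)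
Definition link_ok (a x y : nat) : bool :=
  if cover_up a then (x != 0) ==> (y == 1) else (y != 0) ==> (x == 1).

Definition valid (w : seq nat) : bool :=
  all (fun a => link_ok a (nth 0 w a) (nth 0 w a.+1)) (iota 0 (size w).-1).

Definition twos (w : seq nat) : nat := count (pred1 2) w.

Fixpoint words (n : nat) : seq (seq nat) :=
  if n is n'.+1 then [seq rcons w x | w <- words n', x <- [:: 0; 1; 2]] else [:: [::]].

Definition nwords (n k : nat) : nat :=
  count (fun w => valid w && (twos w == k)) (words n).

Lemma count_words (P : pred (seq nat)) n : count P (words n.+1) =
  count (P \o rcons^~ 0) (words n) + count (P \o rcons^~ 1) (words n)
  + count (P \o rcons^~ 2) (words n).
Proof. by rewrite /=; elim: (words n) => [|w ws IHws] //=; rewrite IHws; lia. Qed.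

Lemma mem_words n w : (w \in words n) = (size w == n) && all (fun a => a < 3) w.
Proof.
elim: n w => [|n IHn] w; first by rewrite inE; case: w.
apply/allpairsP/idP => [[[v x] /= [vn x3 ->]] | ].
  move: vn; rewrite IHn size_rcons all_rcons => /andP [/eqP -> ->].
  by move: x3; rewrite eqxx !inE => /or3P [] /eqP ->.
case/lastP: w => [// | v x]; rewrite size_rcons all_rcons eqSS => /and3P [vn x3 v3].
exists (v, x); split=> //; first by rewrite IHn vn.
by move: x3; case: x => [|[|[|]]].
Qed.

Lemma size_words n w : w \in words n -> size w = n.
Proof. by rewrite mem_words => /andP [/eqP]. Qed.

Lemma nth_words_lt3 n w i : w \in words n -> nth 0 w i < 3.
Proof.
rewrite mem_words => /andP [_ /allP w3].
by case: (ltnP i (size w)) => [/(mem_nth 0)/w3 // | /(nth_default 0) ->].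
Qed.

Lemma uniq_words n : uniq (words n).
Proof.
elim: n => [// | n IHn]; apply: allpairs_uniq => //.
by move=> [v x] [v' x'] _ _ /= /rcons_inj [-> ->].
Qed.

Lemma valid_rcons w x : valid (rcons w x) =
  valid w && ((size w == 0) || link_ok (size w).-1 (last 0 w) x).
Proof.
rewrite /valid size_rcons /=; case/lastP: w => [// | v y].
rewrite size_rcons.
have -> : iota 0 (size v).+1 = rcons (iota 0 (size v)) (size v).
  by rewrite -cats1 -addn1 iotaD.
rewrite all_rcons andbC last_rcons !nth_rcons !size_rcons ltnSn !ltnn !eqxx /=.
congr (_ && _).
apply: eq_in_all => a; rewrite mem_iota add0n => /andP [_ av].
by rewrite !nth_rcons !size_rcons !ltnS av (ltnW av).
Qed.

Lemma twos_rcons w x : twos (rcons w x) = twos w + (x == 2).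
Proof. by rewrite /twos -cats1 count_cat /= addn0 eq_sym. Qed.

Lemma muln_count (T : Type) (b : bool) (P : pred T) s :
  b * count P s = count (fun x => b && P x) s.
Proof. by case: b; rewrite ?mul1n ?mul0n ?count_pred0. Qed.

Definition nwords_last (n k s : nat) : nat :=
  count (fun w => valid (rcons w s) && (twos (rcons w s) == k)) (words n).

Lemma nwords_lastE n k :
  nwords n.+1 k = nwords_last n k 0 + nwords_last n k 1 + nwords_last n k 2.
Proof. by rewrite /nwords count_words. Qed.

Lemma nwords_last_rec n k s : nwords_last n.+1 (k + (s == 2)) s =
  link_ok n 0 s * nwords_last n k 0 + link_ok n 1 s * nwords_last n k 1
  + link_ok n 2 s * nwords_last n k 2.
Proof.
rewrite /nwords_last count_words !muln_count; congr (_ + _ + _).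
all: apply: eq_in_count => w /size_words wn /=; rewrite valid_rcons twos_rcons.
all: rewrite last_rcons size_rcons wn eqn_add2r /=.
all: by case: (link_ok n _ s); rewrite ?andbT ?andbF.
Qed.

Lemma nwords_last_two0 n : nwords_last n 0 2 = 0.
Proof.
rewrite /nwords_last (eq_count (a2 := pred0)) ?count_pred0 // => w.
by rewrite twos_rcons addn1 andbF.
Qed.

Lemma nwords_step n k :
  nwords n.+2 k = nwords n.+1 k + nwords_last n.+1 k.+1 2 + nwords_last n.+1 k 2.
Proof.
have rec0 := nwords_last_rec n k 0; have rec1 := nwords_last_rec n k 1.
have rec2 := nwords_last_rec n k 2; rewrite !addn0 addn1 in rec0 rec1 rec2.
rewrite nwords_lastE rec0 rec1 rec2 nwords_lastE /link_ok.
by case: (cover_up n) => /=; lia.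
Qed.

(* The letter before a final 2 is forced, and as consecutive covers point in
   opposite directions it constrains nothing before it. *)
Lemma nwords_last_two n k : (1 <= n)%N -> nwords_last n.+2 k.+1 2 = nwords n.+1 k.
Proof.
move=> n_gt0; have := nwords_last_rec n.+1 k 2; rewrite addn1 => ->.
have rec0 := nwords_last_rec n k 0; have rec1 := nwords_last_rec n k 1.
rewrite !addn0 in rec0 rec1; rewrite nwords_lastE rec0 rec1 /link_ok /cover_up.
case: n n_gt0 rec0 rec1 => [|[|n]] // _ /= _ _; first lia.
by rewrite negbK; case: (odd n) => /=; lia.
Qed.

Lemma nwords_rec n k : nwords n.+4 k =
  nwords n.+3 k + nwords n.+2 k + (if k is k'.+1 then nwords n.+2 k' else 0).
Proof.
rewrite nwords_step nwords_last_two //; case: k => [|k].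
  by rewrite nwords_last_two0 !addn0.
by rewrite nwords_last_two.
Qed.

Lemma nwords0 k : nwords 0 k = (k == 0).
Proof. by case: k. Qed.

Lemma nwords1 k : nwords 1 k = match k with 0 => 2 | 1 => 1 | _ => 0 end.
Proof. by case: k => [|[|k]]. Qed.

Lemma nwords2 k : nwords 2 k = match k with 0 => 3 | 1 => 2 | _ => 0 end.
Proof. by case: k => [|[|k]]. Qed.

Lemma nwords3 k : nwords 3 k = match k with 0 => 4 | 1 => 3 | _ => 0 end.
Proof. by case: k => [|[|[|[|k]]]]. Qed.

Section WordsOfSubcubes.
Variable n : nat.
Implicit Types (B X : {set 'I_n}) (w : seq nat).

Definition positions w c : {set 'I_n} := [set i : 'I_n | nth 0 w i == c].

Definition word_of B X : seq nat :=
  [seq if i \in X then 2 else if i \in B then 1 else 0 | i <- enum 'I_n].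

Lemma nth_word_of B X (i : 'I_n) :
  nth 0 (word_of B X) i = if i \in X then 2 else if i \in B then 1 else 0.
Proof. by rewrite (nth_map i) ?size_enum_ord // nth_ord_enum. Qed.

Lemma word_of_words B X : word_of B X \in words n.
Proof.
rewrite mem_words size_map size_enum_ord eqxx /=.
by apply/allP => _ /mapP [i _ ->]; case: (i \in X); case: (i \in B).
Qed.

Lemma positions_word_of B X :
  [disjoint B & X] -> positions (word_of B X) 1 = B /\ positions (word_of B X) 2 = X.
Proof.
move=> disBX; split; apply/setP => i; rewrite inE nth_word_of.
  by case: ifP => [/(disjointFl disBX) -> | _]; case: (i \in B).
by case: (i \in X); case: (i \in B).
Qed.

Lemma disjoint_positions w c d : c != d -> [disjoint positions w c & positions w d].
Proof.
move=> neq_cd; rewrite -setI_eq0; apply/eqP/setP => i; rewrite !inE.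
by apply/negbTE/andP => -[/eqP -> /eqP eq_cd]; rewrite eq_cd eqxx in neq_cd.
Qed.

Lemma positions_inj w w' : w \in words n -> w' \in words n ->
  positions w 1 = positions w' 1 -> positions w 2 = positions w' 2 -> w = w'.
Proof.
move=> ww ww' /setP eq1 /setP eq2.
apply: (@eq_from_nth _ 0); rewrite ?(size_words ww) ?(size_words ww') // => i i_lt.
move: (eq1 (Ordinal i_lt)) (eq2 (Ordinal i_lt)); rewrite !inE /=.
move: (nth_words_lt3 i ww) (nth_words_lt3 i ww').
by case: (nth 0 w i) => [|[|[|]]]; case: (nth 0 w' i) => [|[|[|]]].
Qed.

Lemma twos_card w : size w = n -> twos w = #|positions w 2|.
Proof.
move=> wn; rewrite /twos -[in LHS](mkseq_nth 0 w) /mkseq count_map wn.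
rewrite cardsE cardE /enum_mem size_filter -enumT -val_enum_ord count_map.
exact: eq_count.
Qed.

Lemma valid_cube_closed w : w \in words n ->
  valid w = cube_closed (positions w 1) (positions w 2).
Proof.
move=> ww; have wn := size_words ww.
have letter (i : 'I_n) : (nth 0 w i != 0) = (i \in positions w 1 :|: positions w 2).
  by move: (nth_words_lt3 i ww); rewrite !inE; case: (nth 0 w i) => [|[|[|]]].
rewrite /valid wn; apply/allP/forallP => [link i | clw a].
- apply/forallP => j; apply/implyP; rewrite Xi_coverE -letter inE.
  case/orP => /andP [/eqP ji up_i].
  + have ai : val i \in iota 0 n.-1.
      by rewrite mem_iota; move: (ltn_ord j) ji => /=; lia.
    by move: (link _ ai); rewrite /link_ok up_i ji.
  + have aj : val j \in iota 0 n.-1.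
      by rewrite mem_iota; move: (ltn_ord i) ji => /=; lia.
    by move: (link _ aj); rewrite /link_ok (negbTE up_i) ji.
- rewrite mem_iota add0n => /andP [_ a_lt].
  have ai : a < n by lia.
  have aj : a.+1 < n by lia.
  move/forallP/(_ (Ordinal aj)): (clw (Ordinal ai)).
  move/forallP/(_ (Ordinal ai)): (clw (Ordinal aj)).
  rewrite !Xi_coverE -!letter !inE /link_ok /= eqxx.
  by case: (cover_up a) => /=; rewrite ?andbF ?andbT ?orbT ?orbF.
Qed.

End WordsOfSubcubes.

Lemma q_nwords n k : q n k = nwords n k.
Proof.
pose cube_of w := subcube (positions n w 1) (positions n w 2).
pose ws := [seq w <- words n | valid w && (twos w == k)].
have uniq_cubes : uniq [seq cube_of w | w <- ws].
  rewrite map_inj_in_uniq ?filter_uniq ?uniq_words // => w w'.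
  rewrite !mem_filter => /andP [_ wn] /andP [_ w'n] /subcube_inj [] //.
  1,2: exact: disjoint_positions.
  exact: positions_inj.
rewrite /q; suff -> : [set S | induces_cube k S] = [set S in [seq cube_of w | w <- ws]].
  by rewrite cardsE (card_uniqP uniq_cubes) size_map size_filter.
apply/setP => S; rewrite !inE; apply/idP/mapP.
- case/induces_cube_is_subcube => [B [X [disBX clBX cardX ->]]].
  have [eqB eqX] := positions_word_of disBX.
  have wn := word_of_words B X.
  exists (word_of B X); last by rewrite /cube_of eqB eqX.
  rewrite mem_filter wn (valid_cube_closed wn) eqB eqX clBX.
  by rewrite (twos_card (size_words wn)) eqX cardX eqxx.
- case=> w; rewrite mem_filter => /andP [/andP [valid_w /eqP <-] wn] ->.
  rewrite (twos_card (size_words wn)); apply: induces_cube_subcube.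
    exact: disjoint_positions.
  by rewrite -valid_cube_closed.
Qed.

(** * The generating function *)

Local Open Scope ring_scope.

Lemma coef_mulD (p : {poly int}) i : (p * Dpoly)`_i =
  p`_i - (if i is i'.+1 then p`_i' else 0) - (if i is i'.+2 then p`_i' else 0).
Proof.
rewrite /Dpoly !mulrBr mulr1 !coefB [p * 'X]mulrC [p * 'X^2]mulrC coefXM coefXnM.
by case: i => [|[|i]] //=; rewrite subn2.
Qed.

Definition qboundary (k : nat) : {poly int} :=
  match k with
  | 0 => 1 + 'X - 'X^3
  | 1 => 'X - 'X^3 *+ 2
  | 2 => - 'X^3
  | _ => 0
  end.

Section Truncation.
Variable N : nat.

Definition eq_upto (p r : {poly int}) : Prop := forall i, (i <= N)%N -> p`_i = r`_i.

Lemma eq_upto_eq p r : p = r -> eq_upto p r.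
Proof. by move=> ->. Qed.

Lemma eq_upto_trans p r s : eq_upto p r -> eq_upto r s -> eq_upto p s.
Proof. by move=> epr ers i le_iN; rewrite epr // ers. Qed.

Lemma eq_upto_mull s p r : eq_upto p r -> eq_upto (s * p) (s * r).
Proof.
move=> epr i le_iN; rewrite !coefM; apply: eq_bigr => j _.
by rewrite epr // (leq_trans (leq_subr _ _) le_iN).
Qed.

Lemma eq_upto_mulr s p r : eq_upto p r -> eq_upto (p * s) (r * s).
Proof. by rewrite ![_ * s]mulrC; apply: eq_upto_mull. Qed.

Lemma eq_upto_addl s p r : eq_upto p r -> eq_upto (s + p) (s + r).
Proof. by move=> epr i le_iN; rewrite !coefD epr. Qed.

Lemma coef_qgen k i : (qgen k N)`_i = if (i <= N)%N then (q i k)%:R else 0.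
Proof. by rewrite /qgen -(poly_def _ (fun n => (q n k)%:R)) coef_poly ltnS. Qed.

Lemma qgen_mulD k :
  eq_upto (qgen k N * Dpoly) (qboundary k + if k is k'.+1 then 'X^2 * qgen k' N else 0).
Proof.
move=> i le_iN; have le_N j : (j <= i)%N -> (j <= N)%N by move/leq_trans; apply.
rewrite coef_mulD coefD; case: k => [|[|[|k]]]; rewrite /qboundary ?coefXnM.
all: rewrite ?coefD ?coefB ?coefN ?coefMn ?coef1 ?coefX ?coefXn ?coef0.
all: case: i le_iN le_N => [|[|[|[|m]]]] le_iN le_N /=; rewrite !coef_qgen ?le_N //.
all: rewrite ?subSS ?subn0 ?q_nwords ?nwords_rec ?nwords0 ?nwords1 ?nwords2 ?nwords3.
all: by rewrite ?natrD /=; try ring; lia.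
Qed.

Lemma qgen_succ_mulD k : eq_upto (qgen k.+1 N * Dpoly ^+ k.+2)
  (qboundary k.+1 * Dpoly ^+ k.+1 + 'X^2 * (qgen k N * Dpoly ^+ k.+1)).
Proof.
rewrite exprS [qgen _ _ * _]mulrA.
apply: eq_upto_trans (eq_upto_mulr _ (qgen_mulD _)) _.
by apply: eq_upto_eq; rewrite mulrDl mulrA.
Qed.

Lemma qgen_mul_Dpoly k : (1 <= k)%N -> eq_upto (qgen k N * Dpoly ^+ k.+1)
  ((2%:P - 'X) * 'X^(2 * k) + (k == 1)%:R *: ('X * Dpoly ^+ k.+1)).
Proof.
elim: k => [// | k IHk] _; apply: eq_upto_trans (qgen_succ_mulD k) _.
case: k IHk => [_ | [|k] IHk].
- apply: eq_upto_trans (eq_upto_addl _ (eq_upto_mull _ _)) _.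
    by rewrite expr1; apply: qgen_mulD.
  by apply: eq_upto_eq; rewrite /= scale1r /Dpoly; ring.
- apply: eq_upto_trans (eq_upto_addl _ (eq_upto_mull _ (IHk isT))) _.
  by apply: eq_upto_eq; rewrite /= scale1r scale0r /Dpoly; ring.
- apply: eq_upto_trans (eq_upto_addl _ (eq_upto_mull _ (IHk isT))) _.
  apply: eq_upto_eq; rewrite /qboundary !scale0r mul0r add0r !addr0.
  by rewrite [in RHS]mulnS exprD mulrCA.
Qed.

End Truncation.

Theorem mainTheorem12 (k : nat) (hk : (1 <= k)%N) (N i : nat) (hi : (i <= N)%N) :
  (qgen k N * Dpoly ^+ k.+1)`_i =
  ((2%:P - 'X) * 'X^(2 * k) + (k == 1%N)%:R *: ('X * Dpoly ^+ k.+1))`_i.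
Proof. exact: qgen_mul_Dpoly. Qed.
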